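(* Consider a discrete-time time-invariant closed-loop system $\mathbf{x}_{t+1}=f(\mathbf{x}_t,\pi(\mathbf{x}_t))$ with states constrained to $\mathcal{X}\subseteq\mathbb{R}^{n_x}$, and a target set $\mathcal{X}_T$. Let $\mathcal{P}_t$ ($t\le 0$) be the true backprojection sets and let integers $t_2<t_1\le 0$ be given, together with sets $\bar{\mathcal{P}}_t$ for $t_2\le t\le t_1-1$ satisfying $\mathcal{P}_t\subseteq\bar{\mathcal{P}}_t$ (BP over-approximations). If $\bar{\mathcal{P}}_{t_2}\subseteq\mathcal{P}_{t_1}$, then the set $$\mathcal{I}=\mathcal{P}_{t_1}\cup\bigcup_{t=t_2}^{t_1-1}\bar{\mathcal{P}}_t$$ contains all BP sets for $t\le t_1$, i.e. $\mathcal{P}_t\subseteq\mathcal{I}$ for all $t\le t_1$.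
   Context: True backprojection sets: $\mathcal{P}_0=\mathcal{X}_T$ and, for $t<0$, $\mathcal{P}_t=\{\mathbf{x}\in\mathcal{X}\mid f(\mathbf{x},\pi(\mathbf{x}))\in\mathcal{P}_{t+1}\}$, i.e. the set of states from which the closed-loop system reaches $\mathcal{X}_T$ at time $0$. *)

From mathcomp Require Import all_boot all_order all_algebra.
From mathcomp Require Import boolp classical_sets reals.
Set Implicit Arguments. Unset Strict Implicit. Unset Printing Implicit Defensive.
Import Order.TTheory GRing.Theory Num.Theory.
Local Open Scope classical_set_scope.
Local Open Scope ring_scope.

(* backproj_nat k = P_{-k}:  P_0 = XT,  P_{-(k+1)} = {x in X | f x (pi x) \in P_{-k}} *)
Fixpoint backproj_nat {R : realType} {nx nu : nat}
  (f : 'rV[R]_nx -> 'rV[R]_nu -> 'rV[R]_nx) (pi : 'rV[R]_nx -> 'rV[R]_nu)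
  (X XT : set 'rV[R]_nx) (k : nat) : set 'rV[R]_nx :=
  match k with
  | 0%N => XT
  | k'.+1 => [set x | X x /\ backproj_nat f pi X XT k' (f x (pi x))]
  end.

(* True backprojection set P_t for an integer time t <= 0 (indexed by |t|;
   only used for t <= 0). *)
Definition backproj {R : realType} {nx nu : nat}
  (f : 'rV[R]_nx -> 'rV[R]_nu -> 'rV[R]_nx) (pi : 'rV[R]_nx -> 'rV[R]_nu)
  (X XT : set 'rV[R]_nx) (t : int) : set 'rV[R]_nx :=
  backproj_nat f pi X XT `|t|%N.

From mathcomp Require Import all_boot all_order all_algebra.
From mathcomp Require Import boolp classical_sets reals.
From mathcomp Require Import zify.
Import Order.TTheory GRing.Theory Num.Theory.
Local Open Scope classical_set_scope.
Local Open Scope ring_scope.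

(* Since P_{t-1} is the set of states of X mapped into P_t by the closed loop,
   an inclusion P_{t2} ⊆ P_{t1} propagates backwards in time:
   P_{t2-j} ⊆ P_{t1-j} for all j.  Repeatedly shifting by t1 - t2 therefore
   carries every P_t with t <= t1 into one of the sets P_{t'} with
   t2 < t' <= t1, and those with t' < t1 are covered by the over-approximations. *)

Section Backprojection.

Context {R : realType} {nx nu : nat}.
Context { f : 'rV[R]_nx -> 'rV[R]_nu -> 'rV[R]_nx }.
Context { pi : 'rV[R]_nx -> 'rV[R]_nu }.
Context { X XT : set 'rV[R]_nx }.

Local Notation P := (backproj_nat f pi X XT).

Lemma backproj_natD_sub {a b : nat} :
  P b `<=` P a -> forall j, P (b + j) `<=` P (a + j).
Proof.
move=> Pba; elim=> [|j IHj]; first by rewrite !addn0.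
by rewrite !addnS => x [Xx Px]; split=> //; apply: IHj.
Qed.

Lemma backproj_nat_sub_window {a b : nat} :
  (a < b)%N -> P b `<=` P a ->
  forall k, (a <= k)%N -> P k `<=` [set x | exists2 k', (a <= k' < b)%N & P k' x].
Proof.
move=> ltab Pba; elim/ltn_ind=> k IHk lek x Pkx.
have [ltkb | lebk] := ltnP k b; first by exists k => //; apply/andP.
have Pkx' : P (b + (k - b)) x by rewrite subnKC.
apply: (IHk (a + (k - b))%N); [lia | lia | exact: backproj_natD_sub Pkx'].
Qed.

Lemma backprojN_nat (k : nat) : backproj f pi X XT (- k%:Z) = P k.
Proof. by rewrite /backproj abszN absz_nat. Qed.

End Backprojection.

Theorem mainTheorem2 (R : realType) (nx nu : nat)
  (f : 'rV[R]_nx -> 'rV[R]_nu -> 'rV[R]_nx) (pi : 'rV[R]_nx -> 'rV[R]_nu)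
  (X XT : set 'rV[R]_nx) (t1 t2 : int) (Pbar : int -> set 'rV[R]_nx) :
  t2 < t1 -> t1 <= 0 ->
  (forall t : int, t2 <= t -> t <= t1 - 1 -> backproj f pi X XT t `<=` Pbar t) ->
  Pbar t2 `<=` backproj f pi X XT t1 ->
  forall t : int, t <= t1 ->
    backproj f pi X XT t `<=`
      (backproj f pi X XT t1 `|`
        [set x | exists t' : int, [/\ t2 <= t', t' <= t1 - 1 & Pbar t' x]]).
Proof.
move=> lt21 le10 Pbar_over Pbar2_sub t let1 x Ptx.
have P21 : backproj f pi X XT t2 `<=` backproj f pi X XT t1.
  by move=> y /Pbar_over Py; apply/Pbar2_sub/Py; lia.
have lt12 : (`|t1| < `|t2|)%N by lia.
have le1t : (`|t1| <= `|t|)%N by lia.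
have [k /andP[lek ltk] Pkx] := backproj_nat_sub_window lt12 P21 _ le1t x Ptx.
have [eqk|nek] := eqVneq k `|t1|%N; first by left; rewrite /backproj -eqk.
right; exists (- k%:Z); split; [lia | lia |].
by apply: Pbar_over; [lia | lia | rewrite backprojN_nat].
Qed.
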